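(* Let $\mathbb M$ be an $\mathcal R$-module. Then $\mathbb M$ is dually separated if and only if for every $\mathcal R$-module $\mathbb N$, setting $\mathbb M'=\mathbb N^*$, the map $$\operatorname{Hom}_{\mathcal R}(\mathbb M,\mathbb M')\to\operatorname{Hom}_R(\mathbb M(R),\mathbb M'(R)),\qquad f\mapsto f_R,$$ is injective.
   Context: $R$ is a commutative ring. An $\mathcal R$-module is a covariant functor $\mathbb M$ from commutative $R$-algebras to abelian groups with each $\mathbb M(S)$ an $S$-module, functorially; morphisms are natural transformations that are $S$-linear on each $S$. For an $R$-module $N$, $\mathcal N(S)=N\otimes_R S$. $\mathbb M_{|S}$ denotes restriction to $S$-algebras, and $\mathbb M^*(S)=\operatorname{Hom}_{\mathcal S}(\mathbb M_{|S},\mathcal S)$. $\mathbb M$ is dually separated if for every commutative $R$-algebra $S$ the map $\mathbb M^*(S)\to\operatorname{Hom}_R(\mathbb M(R),S)$, $w\mapsto w_R$, is injective (equivalently the natural morphism $\mathbb M^*\to\mathbb M_{qc}^*$ is a monomorphism, where $\mathbb M_{qc}(S)=\mathbb M(R)\otimes_R S$). *)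

From HB Require Import structures.
From mathcomp Require Import all_boot all_algebra.
Set Implicit Arguments. Unset Strict Implicit. Unset Printing Implicit Defensive.
Import GRing.Theory.
Local Open Scope ring_scope.

Definition is_ring_hom (A B : comPzRingType) (f : A -> B) : Prop :=
  (forall x y, f (x + y) = f x + f y) /\ (forall x y, f (x * y) = f x * f y)
  /\ f 1 = 1.

Record ralg (R : comPzRingType) := RAlg {
  ralg_car :> comPzRingType;
  ralg_str : R -> ralg_car;
  ralg_strP : is_ring_hom ralg_str }.
Arguments ralg_str {R} S r : rename.

Record rhom (R : comPzRingType) (S T : ralg R) := Hom {
  hom_fun :> S -> T;
  hom_ringP : is_ring_hom hom_fun;
  hom_strP : forall r, hom_fun (ralg_str S r) = ralg_str T r }.

Lemma id_is_ring_hom (A : comPzRingType) : is_ring_hom (@id A).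
Proof. by split; [|split]. Qed.

Lemma comp_is_ring_hom (A B C : comPzRingType) (g : B -> C) (f : A -> B) :
  is_ring_hom g -> is_ring_hom f -> is_ring_hom (g \o f).
Proof.
move=> [g1 [g2 g3]] [f1 [f2 f3]]; split; [|split] => /=.
- by move=> x y; rewrite f1 g1.
- by move=> x y; rewrite f2 g2.
- by rewrite f3 g3.
Qed.

Definition base_alg (R : comPzRingType) : ralg R :=
  @RAlg R R id (id_is_ring_hom R).

Definition id_hom (R : comPzRingType) (S : ralg R) : rhom S S :=
  @Hom R S S id (id_is_ring_hom S) (fun r => erefl).

Lemma comp_hom_strP (R : comPzRingType) (S T U : ralg R) (g : rhom T U)
  (f : rhom S T) r : (g \o f) (ralg_str S r) = ralg_str U r.
Proof. by rewrite /= hom_strP hom_strP. Qed.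

Definition comp_hom (R : comPzRingType) (S T U : ralg R) (g : rhom T U)
  (f : rhom S T) : rhom S U :=
  @Hom R S U (g \o f) (comp_is_ring_hom (hom_ringP g) (hom_ringP f))
       (comp_hom_strP g f).

Definition str_hom (R : comPzRingType) (S : ralg R) : rhom (base_alg R) S :=
  @Hom R (base_alg R) S (ralg_str S) (ralg_strP S) (fun r => erefl).

(* R-modules in the functorial sense: covariant functors M from commutative
   R-algebras to abelian groups, each M(S) an S-module, M(f) f-semilinear. *)
Record RMod (R : comPzRingType) := {
  mcar : ralg R -> Type;
  mzero : forall S, mcar S;
  madd : forall S, mcar S -> mcar S -> mcar S;
  mopp : forall S, mcar S -> mcar S;
  mscale : forall S : ralg R, S -> mcar S -> mcar S;
  mmap : forall S T : ralg R, rhom S T -> mcar S -> mcar T;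
  maddA : forall S (x y z : mcar S), madd x (madd y z) = madd (madd x y) z;
  maddC : forall S (x y : mcar S), madd x y = madd y x;
  madd0 : forall S (x : mcar S), madd (mzero S) x = x;
  maddN : forall S (x : mcar S), madd (mopp x) x = mzero S;
  mscale1 : forall S (x : mcar S), mscale 1 x = x;
  mscaleA : forall (S : ralg R) (a b : S) (x : mcar S), mscale a (mscale b x) = mscale (a * b) x;
  mscaleDr : forall (S : ralg R) (a : S) (x y : mcar S),
      mscale a (madd x y) = madd (mscale a x) (mscale a y);
  mscaleDl : forall (S : ralg R) (a b : S) (x : mcar S),
      mscale (a + b) x = madd (mscale a x) (mscale b x);
  mmap_add : forall S T (f : rhom S T) (x y : mcar S),
      mmap f (madd x y) = madd (mmap f x) (mmap f y);
  mmap_scale : forall S T (f : rhom S T) (a : S) (x : mcar S),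
      mmap f (mscale a x) = mscale (f a) (mmap f x);
  mmap_id : forall S (x : mcar S), mmap (id_hom S) x = x;
  mmap_comp : forall S T U (g : rhom T U) (f : rhom S T) (x : mcar S),
      mmap (comp_hom g f) x = mmap g (mmap f x) }.
Arguments mcar {R} r S : rename.
Arguments mzero {R r} S : rename.
Arguments madd {R r S} : rename.
Arguments mopp {R r S} : rename.
Arguments mscale {R r S} : rename.
Arguments mmap {R r S T} : rename.

(* Raw data of an element w of M^*(S) = Hom_S(M_{|S}, S): for every
   S-algebra (T, i : S -> T) a map w_(T,i) : M(T) -> T. *)
Definition dual_family (R : comPzRingType) (M : RMod R) (S : ralg R) :=
  forall (T : ralg R) (i : rhom S T), mcar M T -> T.

(* w is a morphism of S-modules M_{|S} -> S: T-linear components, natural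
   w.r.t. morphisms of S-algebras g : (T,i) -> (T',i') (i.e. g \o i = i'). *)
Definition is_dual_elt (R : comPzRingType) (M : RMod R) (S : ralg R)
  (w : dual_family M S) : Prop :=
  (forall (T : ralg R) (i : rhom S T) (x y : mcar M T), w T i (madd x y) = w T i x + w T i y) /\
  (forall (T : ralg R) (i : rhom S T) (a : T) (x : mcar M T), w T i (mscale a x) = a * w T i x) /\
  (forall (T T' : ralg R) (i : rhom S T) (i' : rhom S T') (g : rhom T T'),
     (forall s, g (i s) = i' s) ->
     forall x : mcar M T, w T' i' (mmap g x) = g (w T i x)).

(* M is dually separated: for every S, w |-> w_R (i.e. m |-> w_S(m (x) 1)),
   M^*(S) -> Hom_R(M(R), S), is injective. *)
Definition dually_separated (R : comPzRingType) (M : RMod R) : Prop :=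
  forall (S : ralg R) (w w' : dual_family M S),
    is_dual_elt w -> is_dual_elt w' ->
    (forall m : mcar M (base_alg R),
        w S (id_hom S) (mmap (str_hom S) m) = w' S (id_hom S) (mmap (str_hom S) m)) ->
    forall (T : ralg R) (i : rhom S T) (x : mcar M T), w T i x = w' T i x.

(* A morphism of R-modules F : M -> N^*, written out: F_S(m) in N^*(S) for
   each m in M(S); F_S is S-linear (N^*(S) has pointwise addition and
   (a.w)_(T,i) = i(a) w_(T,i)); F is natural, where for g : S -> S',
   N^*(g)(w)_(T,i') = w_(T, i' \o g). *)
Definition is_hom_to_dual (R : comPzRingType) (M N : RMod R)
  (F : forall S : ralg R, mcar M S -> dual_family N S) : Prop :=
  (forall (S : ralg R) (m : mcar M S), is_dual_elt (F S m)) /\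
  (forall (S : ralg R) (m m' : mcar M S) (T : ralg R) (i : rhom S T) (n : mcar N T),
     F S (madd m m') T i n = F S m T i n + F S m' T i n) /\
  (forall (S : ralg R) (a : S) (m : mcar M S) (T : ralg R) (i : rhom S T) (n : mcar N T),
     F S (mscale a m) T i n = i a * F S m T i n) /\
  (forall (S S' : ralg R) (g : rhom S S') (m : mcar M S) (T : ralg R)
          (i : rhom S' T) (j : rhom S T),
     (forall s, i (g s) = j s) ->
     forall n : mcar N T, F S' (mmap g m) T i n = F S m T j n).

(* Forward direction: a morphism F : M -> N^* and n in N(T) give the element
   x |-> F(x)(n) of M^*(T), whose restriction to M(R) is determined by F_R;
   dual separation then pins down F.  Backward direction: take for N the
   submodule of M^* of forms vanishing on the image of M(R); evaluation
   M -> N^* agrees with the zero morphism on M(R), so it is zero, i.e. two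
   forms of M^*(S) agreeing on M(R) agree everywhere. *)
From Stdlib Require Import FunctionalExtensionality ProofIrrelevance.
From HB Require Import structures.
From mathcomp Require Import all_boot all_algebra.
Set Implicit Arguments. Unset Strict Implicit. Unset Printing Implicit Defensive.
Import GRing.Theory.
Local Open Scope ring_scope.

Lemma ring_hom0 {A B : comPzRingType} {f : A -> B} : is_ring_hom f -> f 0 = 0.
Proof. by move=> [fD _]; apply: (@addrI _ (f 0)); rewrite -fD !addr0. Qed.

Lemma ring_homN {A B : comPzRingType} {f : A -> B} :
  is_ring_hom f -> forall x, f (- x) = - f x.
Proof.
move=> f_hom x; have [fD _] := f_hom; apply: (@addrI _ (f x)).
by rewrite -fD !subrr (ring_hom0 f_hom).
Qed.

Section AlgebraMorphisms.
Variable R : comPzRingType.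

Lemma rhom_ext (S T : ralg R) (f g : rhom S T) : f =1 g -> f = g.
Proof.
case: f g => f fR fS [g gR gS] /= /functional_extensionality fg; subst g.
by rewrite (proof_irrelevance _ fR gR) (proof_irrelevance _ fS gS).
Qed.

Lemma comp_hom_id (S T : ralg R) (f : rhom S T) : comp_hom f (id_hom S) = f.
Proof. exact: rhom_ext. Qed.

Lemma comp_id_hom (S T : ralg R) (f : rhom S T) : comp_hom (id_hom T) f = f.
Proof. exact: rhom_ext. Qed.

Lemma comp_homA (S T U V : ralg R) (h : rhom U V) (g : rhom T U) (f : rhom S T) :
  comp_hom h (comp_hom g f) = comp_hom (comp_hom h g) f.
Proof. exact: rhom_ext. Qed.

Lemma str_homE (T : ralg R) (i : rhom (base_alg R) T) : i = str_hom T.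
Proof. exact/rhom_ext/hom_strP. Qed.

End AlgebraMorphisms.

Section DualModule.
Variables (R : comPzRingType) (M : RMod R).

Definition dual0 (S : ralg R) : dual_family M S := fun T i x => 0.
Definition dualD (S : ralg R) (w w' : dual_family M S) : dual_family M S :=
  fun T i x => w T i x + w' T i x.
Definition dualN (S : ralg R) (w : dual_family M S) : dual_family M S :=
  fun T i x => - w T i x.
Definition dualZ (S : ralg R) (a : S) (w : dual_family M S) : dual_family M S :=
  fun T i x => i a * w T i x.
Definition dual_map (S S' : ralg R) (h : rhom S S') (w : dual_family M S) :
  dual_family M S' := fun T i x => w T (comp_hom i h) x.

Lemma dual_elt0 S : is_dual_elt (@dual0 S).
Proof.
split; [|split] => [* | * | T T' i i' g _ x]; rewrite /dual0 ?addr0 ?mulr0 //.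
by rewrite (ring_hom0 (hom_ringP g)).
Qed.

Lemma dual_eltD S (w w' : dual_family M S) :
  is_dual_elt w -> is_dual_elt w' -> is_dual_elt (dualD w w').
Proof.
move=> [wD [wZ wN]] [w'D [w'Z w'N]]; split; [|split]; rewrite /dualD.
- by move=> T i x y; rewrite wD w'D addrACA.
- by move=> T i a x; rewrite wZ w'Z mulrDr.
- move=> T T' i i' g gi x; rewrite (wN _ _ _ _ _ gi) (w'N _ _ _ _ _ gi).
  by case: (hom_ringP g) => ->.
Qed.

Lemma dual_eltN S (w : dual_family M S) : is_dual_elt w -> is_dual_elt (dualN w).
Proof.
move=> [wD [wZ wN]]; split; [|split]; rewrite /dualN.
- by move=> T i x y; rewrite wD opprD.
- by move=> T i a x; rewrite wZ mulrN.
- move=> T T' i i' g gi x.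
  by rewrite (wN _ _ _ _ _ gi) (ring_homN (hom_ringP g)).
Qed.

Lemma dual_eltZ (S : ralg R) (a : S) (w : dual_family M S) :
  is_dual_elt w -> is_dual_elt (dualZ a w).
Proof.
move=> [wD [wZ wN]]; split; [|split]; rewrite /dualZ.
- by move=> T i x y; rewrite wD mulrDr.
- by move=> T i b x; rewrite wZ mulrCA.
- move=> T T' i i' g gi x; rewrite (wN _ _ _ _ _ gi).
  by case: (hom_ringP g) => _ [-> _]; rewrite gi.
Qed.

Lemma dual_elt_map S S' (h : rhom S S') (w : dual_family M S) :
  is_dual_elt w -> is_dual_elt (dual_map h w).
Proof.
move=> [wD [wZ wN]]; split; [|split] => [T i x y | T i a x | T T' i i' g gi x].
- exact: wD.
- exact: wZ.
- exact: (wN _ _ (comp_hom i h) (comp_hom i' h) g (fun s => gi (h s))).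
Qed.

Lemma dual_elt_baseE S (w : dual_family M S) (T : ralg R) (g : rhom S T)
    (m : mcar M (base_alg R)) :
  is_dual_elt w ->
  w T g (mmap (str_hom T) m) = g (w S (id_hom S) (mmap (str_hom S) m)).
Proof.
move=> [_ [_ wN]].
have -> : str_hom T = comp_hom g (str_hom S) by apply/rhom_ext => r /=; rewrite hom_strP.
by rewrite mmap_comp (wN _ _ (id_hom S) g g (fun _ => erefl)).
Qed.

Definition vanishes_on_base S (w : dual_family M S) : Prop :=
  forall (T : ralg R) (g : rhom S T) (m : mcar M (base_alg R)),
    w T g (mmap (str_hom T) m) = 0.

Definition base_annihilator_car (S : ralg R) :=
  {w : dual_family M S | is_dual_elt w /\ vanishes_on_base w}.

Lemma base_annihilator_eq S (u v : base_annihilator_car S) :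
  (forall T i x, proj1_sig u T i x = proj1_sig v T i x) -> u = v.
Proof.
case: u v => [w wP] [w' w'P] /= ww'.
have E : w = w'.
  do 2 apply: functional_extensionality_dep => ?.
  exact/functional_extensionality/ww'.
by subst w'; rewrite (proof_irrelevance _ wP w'P).
Qed.

Definition annihilator0 S : base_annihilator_car S :=
  exist _ (@dual0 S) (conj (dual_elt0 S) (fun _ _ _ => erefl)).

Lemma annihilatorD_subproof S (u v : base_annihilator_car S) :
  is_dual_elt (dualD (proj1_sig u) (proj1_sig v)) /\
  vanishes_on_base (dualD (proj1_sig u) (proj1_sig v)).
Proof.
case: u v => [w [wP w0]] [w' [w'P w'0]] /=; split; first exact: dual_eltD.
by move=> T g m; rewrite /dualD w0 w'0 addr0.
Qed.

Lemma annihilatorN_subproof S (u : base_annihilator_car S) :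
  is_dual_elt (dualN (proj1_sig u)) /\ vanishes_on_base (dualN (proj1_sig u)).
Proof.
case: u => [w [wP w0]] /=; split; first exact: dual_eltN.
by move=> T g m; rewrite /dualN w0 oppr0.
Qed.

Lemma annihilatorZ_subproof (S : ralg R) (a : S) (u : base_annihilator_car S) :
  is_dual_elt (dualZ a (proj1_sig u)) /\ vanishes_on_base (dualZ a (proj1_sig u)).
Proof.
case: u => [w [wP w0]] /=; split; first exact: dual_eltZ.
by move=> T g m; rewrite /dualZ w0 mulr0.
Qed.

Lemma annihilator_map_subproof S S' (h : rhom S S') (u : base_annihilator_car S) :
  is_dual_elt (dual_map h (proj1_sig u)) /\
  vanishes_on_base (dual_map h (proj1_sig u)).
Proof.
case: u => [w [wP w0]] /=; split; first exact: dual_elt_map.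
by move=> T g m; apply: w0.
Qed.

Definition base_annihilator : RMod R.
refine {| mcar := base_annihilator_car;
          mzero := annihilator0;
          madd S u v := exist _ _ (annihilatorD_subproof u v);
          mopp S u := exist _ _ (annihilatorN_subproof u);
          mscale S a u := exist _ _ (annihilatorZ_subproof a u);
          mmap S S' h u := exist _ _ (annihilator_map_subproof h u) |};
  move=> *; apply: base_annihilator_eq => T i x /=;
  rewrite /dualD /dualN /dualZ /dual_map /dual0.
- exact: addrA.
- exact: addrC.
- exact: add0r.
- exact: addNr.
- by case: (hom_ringP i) => _ [_ ->]; rewrite mul1r.
- by case: (hom_ringP i) => _ [-> _]; rewrite mulrA.
- exact: mulrDr.
- by case: (hom_ringP i) => -> _; rewrite mulrDl.
- by [].
- by [].
- by rewrite comp_hom_id.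
- by rewrite comp_homA.
Defined.

Definition annihilator_eval :
    forall S : ralg R, mcar M S -> dual_family base_annihilator S :=
  fun S m T i u => proj1_sig u T (id_hom T) (mmap i m).

Lemma annihilator_evalP : is_hom_to_dual annihilator_eval.
Proof.
rewrite /annihilator_eval.
split; [|split; [|split]] => [S m | S m m' T i [w [wP _]] |
                              S a m T i [w [wP _]] | S S' g m T i j ij u] /=.
- split; [|split] => // T T' i i' g gi [w [[_ [_ wN]] _]] /=.
  rewrite -(wN _ _ (id_hom T) (comp_hom (id_hom T') g) g (fun _ => erefl)).
  by rewrite -mmap_comp (@rhom_ext _ _ _ (comp_hom g i) i' gi).
- by rewrite mmap_add; case: wP.
- by rewrite mmap_scale; case: wP => _ [].
- by rewrite -mmap_comp (@rhom_ext _ _ _ (comp_hom i g) j ij).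
Qed.

Lemma annihilator_eval_base (m : mcar M (base_alg R)) (T : ralg R)
    (i : rhom (base_alg R) T) (u : mcar base_annihilator T) :
  annihilator_eval m i u = 0.
Proof. by case: u => [w [wP w0]]; rewrite /annihilator_eval /= (str_homE i) w0. Qed.

End DualModule.

Lemma hom_to_dual0 (R : comPzRingType) (M N : RMod R) :
  is_hom_to_dual
    (fun (S : ralg R) (m : mcar M S) (T : ralg R) (i : rhom S T) (n : mcar N T) => 0 : T).
Proof.
split; [|split; [|split]] => *; rewrite ?addr0 ?mulr0 //.
exact: dual_elt0.
Qed.

Section HomToDual.
Variables (R : comPzRingType) (M N : RMod R).
Variable F : forall S : ralg R, mcar M S -> dual_family N S.
Hypothesis F_hom : is_hom_to_dual F.

Lemma hom_to_dual_base_change S (m : mcar M S) (T : ralg R) (i : rhom S T)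
    (n : mcar N T) :
  F m i n = F (mmap i m) (id_hom T) n.
Proof. by have [_ [_ [_ FN]]] := F_hom; rewrite (FN _ _ i m T (id_hom T) i). Qed.

Definition dual_transpose (T : ralg R) (n : mcar N T) : dual_family M T :=
  fun T' j x => F x (id_hom T') (mmap j n).

Lemma dual_transposeP T (n : mcar N T) : is_dual_elt (dual_transpose n).
Proof.
have [FP [FD [FZ _]]] := F_hom.
split; [|split] => [T' j x y | T' j a x | T1 T2 i1 i2 g gi x]; rewrite /dual_transpose.
- exact: FD.
- exact: FZ.
have [_ [_ FxN]] := FP T1 x.
rewrite -hom_to_dual_base_change -(FxN _ _ (id_hom T1) g g (fun _ => erefl)).
by rewrite -mmap_comp (@rhom_ext _ _ _ (comp_hom g i1) i2 gi).
Qed.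

Lemma dual_transpose_base T (n : mcar N T) (m : mcar M (base_alg R)) :
  dual_transpose n (id_hom T) (mmap (str_hom T) m) = F m (str_hom T) n.
Proof. by rewrite /dual_transpose mmap_id -hom_to_dual_base_change. Qed.

Lemma dual_transposeE S (m : mcar M S) (T : ralg R) (i : rhom S T)
    (n : mcar N T) :
  F m i n = dual_transpose n (id_hom T) (mmap i m).
Proof. by rewrite /dual_transpose mmap_id hom_to_dual_base_change. Qed.

End HomToDual.

Lemma dually_separated_hom_to_dual_eq (R : comPzRingType) (M N : RMod R)
    (F F' : forall S : ralg R, mcar M S -> dual_family N S) :
  dually_separated M -> is_hom_to_dual F -> is_hom_to_dual F' ->
  (forall (m : mcar M (base_alg R)) (T : ralg R) (i : rhom (base_alg R) T)
          (n : mcar N T), F _ m _ i n = F' _ m _ i n) ->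
  forall (S : ralg R) (m : mcar M S) (T : ralg R) (i : rhom S T) (n : mcar N T),
    F _ m _ i n = F' _ m _ i n.
Proof.
move=> sepM F_hom F'_hom FF'_base S m T i n.
rewrite (dual_transposeE F_hom) (dual_transposeE F'_hom).
apply: sepM; try exact: dual_transposeP.
by move=> m0; rewrite !dual_transpose_base.
Qed.

Lemma dually_separated_of_hom_to_dual_eq (R : comPzRingType) (M : RMod R) :
  (forall (F F' : forall S : ralg R, mcar M S -> dual_family (base_annihilator M) S),
     is_hom_to_dual F -> is_hom_to_dual F' ->
     (forall (m : mcar M (base_alg R)) (T : ralg R) (i : rhom (base_alg R) T)
             (n : mcar (base_annihilator M) T), F _ m _ i n = F' _ m _ i n) ->
     forall (S : ralg R) (m : mcar M S) (T : ralg R) (i : rhom S T)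
            (n : mcar (base_annihilator M) T), F _ m _ i n = F' _ m _ i n) ->
  dually_separated M.
Proof.
move=> hom_sep S w w' w_dual w'_dual ww'_base T i x.
set d := dualD w (dualN w').
have d_dual : is_dual_elt d by apply/dual_eltD/dual_eltN.
have d_base : vanishes_on_base (dual_map i d).
  move=> T' g m0; rewrite /dual_map dual_elt_baseE //.
  by rewrite /d /dualD /dualN ww'_base subrr (ring_hom0 (hom_ringP _)).
have := hom_sep _ _ (annihilator_evalP M) (hom_to_dual0 M (base_annihilator M))
  (@annihilator_eval_base _ M) T x T (id_hom T)
  (exist _ _ (conj (dual_elt_map i d_dual) d_base)).
by rewrite /annihilator_eval /= mmap_id /dual_map comp_id_hom => /subr0_eq.
Qed.

Theorem theorem3p8 (R : comPzRingType) (M : RMod R) :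
  dually_separated M <->
  (forall (N : RMod R) (F F' : forall S : ralg R, mcar M S -> dual_family N S),
     is_hom_to_dual F -> is_hom_to_dual F' ->
     (forall (m : mcar M (base_alg R)) (T : ralg R) (i : rhom (base_alg R) T)
             (n : mcar N T),
        F (base_alg R) m T i n = F' (base_alg R) m T i n) ->
     forall (S : ralg R) (m : mcar M S) (T : ralg R) (i : rhom S T) (n : mcar N T),
       F S m T i n = F' S m T i n).
Proof.
split=> [sepM N F F' | hom_sep]; first exact: dually_separated_hom_to_dual_eq.
exact/dually_separated_of_hom_to_dual_eq/hom_sep.
Qed.
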